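(* Let $p$ be a prime and $G=S^1\times C_p$. Then $G$ is not a BU-group of type II: there exist fixed-point-free orthogonal $G$-representations $V,W$ with $\dim V=\dim W$ and a $G$-map $f:S(V)\to S(W)$ with $\deg f=0$.
   Context: An orthogonal $G$-representation $V$ is fixed-point-free if $V^G=0$; $S(V)$ denotes its unit sphere, and a $G$-map is a continuous $G$-equivariant map. $G$ is a BU-group of type II if for all fixed-point-free orthogonal $G$-representations $V,W$ with $\dim V=\dim W$, every $G$-map $f:S(V)\to S(W)$ has $\deg f\neq 0$. *)

From HB Require Import structures.
From mathcomp Require Import all_boot all_order all_algebra.
From mathcomp Require Import all_classical all_reals all_analysis.
Set Implicit Arguments. Unset Strict Implicit. Unset Printing Implicit Defensive.
Import Order.TTheory GRing.Theory Num.Theory.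
Import numFieldNormedType.Exports.
Local Open Scope classical_set_scope.
Local Open Scope ring_scope.

(* Euclidean unit sphere S(R^n) in row vectors 'rV[R]_n
   (the built-in norm on 'rV is the sup norm, so we use the Euclidean one). *)
Definition unit_sphere (R : realType) (n : nat) : set 'rV[R]_n :=
  [set x | \sum_(i < n) (x ord0 i) ^+ 2 = 1].
Arguments unit_sphere {R} n.

(* The group G = S^1 x C_p, with S^1 = R/Z written additively via the angle
   t : R (t and t+1 give the same element) and C_p = 'Z_p.
   An orthogonal G-representation of dimension n is a continuous homomorphism
   rho : G -> O(n); rho t k is the matrix of (t mod 1, k), acting on row
   vectors by v |-> v *m rho t k (G is abelian, so left/right is immaterial). *)
Definition orth_rep (R : realType) (p n : nat)
    (rho : R -> 'Z_p -> 'M[R]_n) : Prop :=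
  [/\ forall t k, rho t k *m (rho t k)^T = 1%:M,
      rho 0 0 = 1%:M,
      forall s t k l, rho (s + t) (k + l)%R = rho s k *m rho t l,
      forall t k, rho (t + 1) k = rho t k &
      forall k (i j : 'I_n), continuous (fun t => rho t k i j)].

Definition fixed_point_free (R : realType) (p n : nat)
    (rho : R -> 'Z_p -> 'M[R]_n) : Prop :=
  forall v : 'rV[R]_n, (forall t k, v *m rho t k = v) -> v = 0.

Definition Gmap (R : realType) (p n : nat) (rhoV rhoW : R -> 'Z_p -> 'M[R]_n)
    (f : 'rV[R]_n -> 'rV[R]_n) : Prop :=
  [/\ forall x, unit_sphere n x -> unit_sphere n (f x),
      {within unit_sphere n, continuous f} &
      forall x t k, unit_sphere n x -> f (x *m rhoV t k) = f x *m rhoW t k].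

(* Brouwer degree, via the differential-topology definition (Milnor):
   deg f = d iff there is a C^1 map g : S^{n-1} -> S^{n-1} homotopic to f
   and a regular value y of g such that d is the signed count of g^{-1}(y).
   The local sign at x is the sign of det M, where M is the linear map of R^n
   sending x to g x and acting as dg_x on the tangent space x^perp;
   with the orientation "outward normal first" this is the local degree. *)
Definition sphere_local_matrix (R : realType) (n : nat)
    (g : 'rV[R]_n -> 'rV[R]_n) (x : 'rV[R]_n) : 'M[R]_n :=
  (1%:M - x^T *m x) *m 'J g x + x^T *m g x.

Definition has_degree (R : realType) (n : nat)
    (f : 'rV[R]_n -> 'rV[R]_n) (d : int) : Prop :=
  exists (g : 'rV[R]_n -> 'rV[R]_n) (U : set 'rV[R]_n)
         (H : R * 'rV[R]_n -> 'rV[R]_n) (y : 'rV[R]_n) (s : seq 'rV[R]_n),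
    [/\
        (open U /\ unit_sphere n `<=` U),
        ((forall x, U x -> differentiable g x) /\
          (forall i j, {in U, continuous (fun x => 'J g x i j)}) /\
          (forall x, unit_sphere n x -> unit_sphere n (g x))),
        [/\ {within `[0, 1]%classic `*` unit_sphere n, continuous H},
            (forall t x, 0 <= t <= 1 -> unit_sphere n x ->
                 unit_sphere n (H (t, x))),
            (forall x, unit_sphere n x -> H (0, x) = f x) &
            (forall x, unit_sphere n x -> H (1, x) = g x)],
        [/\ unit_sphere n y, uniq s,
            (forall x, (x \in s) <-> (unit_sphere n x /\ g x = y)) &
            (forall x, x \in s -> \det (sphere_local_matrix g x) != 0)] &
        d = \sum_(x <- s) sgz (\det (sphere_local_matrix g x))].

From HB Require Import structures.
From mathcomp Require Import all_boot all_order all_algebra.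
From mathcomp Require Import all_classical all_reals all_analysis.
From mathcomp Require Import ring lra.
Import Order.TTheory GRing.Theory Num.Theory.
Import numFieldNormedType.Exports.
Local Open Scope classical_set_scope.
Local Open Scope ring_scope.
Set Implicit Arguments. Unset Strict Implicit. Unset Printing Implicit Defensive.

(* Identify R^4 with C^2 (a complex number being a pair of reals) and write
   e(x) = exp(2 pi i x). Let G act on V = C^2 and W = C^2 by
     (t,k).(z, w) = (e(t + k/p) z, e(t) w),   (t,k).(u, v) = (e(k/p) u, e(p t) v),
   and put F(z, w) = (z conj(w), z^p + w^p), f = F / |F|.
   - F is equivariant (z conj w is multiplied by e(k/p), z^p and w^p by
     e(p t)) and does not vanish on the sphere, so f is a G-map S(V) -> S(W).
   - V and W are fixed-point-free: (1/2, 0) acts as -1 on V; on W, (1/(2p), 0)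
     is -1 on the second factor and (0, 1) a nontrivial rotation of the first.
   - f misses the point (1, 0): z conj w > 0 and z^p = - w^p force z = w,
     hence z = 0. A map between unit spheres missing a point y has degree 0:
     the normalized straight-line homotopy deforms it into the constant map
     -y, for which y is a regular value with empty preimage. *)

Section ComplexPairs.
Variable R : realType.
Implicit Types (u z w : R * R) (t : R).

Definition cmul u z : R * R := (u.1 * z.1 - u.2 * z.2, u.1 * z.2 + u.2 * z.1).
Definition cadd u z : R * R := (u.1 + z.1, u.2 + z.2).
Definition cconj u : R * R := (u.1, - u.2).
Definition cscale (c : R) u : R * R := (c * u.1, c * u.2).
Definition cnorm2 u : R := u.1 ^+ 2 + u.2 ^+ 2.
Fixpoint cpow z n : R * R := if n is n'.+1 then cmul (cpow z n') z else (1, 0).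
Definition cexpi t : R * R := (cos t, sin t).

Lemma cmulDl u w z : cmul (cadd u w) z = cadd (cmul u z) (cmul w z).
Proof. by rewrite /cmul /cadd /=; congr pair; ring. Qed.

Lemma cpowM u z n : cpow (cmul u z) n = cmul (cpow u n) (cpow z n).
Proof.
elim: n => [|n IH] /=; first by rewrite /cmul /=; congr pair; ring.
by rewrite IH /cmul /=; congr pair; ring.
Qed.

Lemma cexpiD a b : cexpi (a + b) = cmul (cexpi a) (cexpi b).
Proof. by rewrite /cexpi /cmul /= cosD sinD; congr pair; ring. Qed.

Lemma cpow_expi t n : cpow (cexpi t) n = cexpi (t *+ n).
Proof.
elim: n => [|n IH] /=; first by rewrite /cexpi mulr0n cos0 sin0.
by rewrite IH mulrS addrC cexpiD.
Qed.

Lemma cexpi_period t m : cexpi (t + (pi *+ 2) *+ m) = cexpi t.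
Proof.
elim: m => [|m IH]; first by rewrite mulr0n addr0.
by rewrite mulrSr addrA /cexpi cosD2pi sinD2pi -/(cexpi _) IH.
Qed.

(* Multiplying by a unit complex number u on one side and by conj u on the
   other leaves z conj w unchanged; this drives the equivariance of F. *)
Lemma cmul_conj_unit z w u v : cnorm2 u = 1 ->
  cmul (cmul z (cmul u v)) (cconj (cmul w u)) = cmul (cmul z (cconj w)) v.
Proof.
rewrite /cnorm2 /cmul /cconj /= => hu; congr pair; rewrite -[RHS]mulr1 -hu; ring.
Qed.

Lemma cnorm2M u z : cnorm2 (cmul u z) = cnorm2 u * cnorm2 z.
Proof. by rewrite /cnorm2 /cmul /=; ring. Qed.

Lemma cnorm2_pow z n : cnorm2 (cpow z n) = cnorm2 z ^+ n.
Proof.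
elim: n => [|n IH] /=; first by rewrite /cnorm2 /= expr1n expr0n addr0.
by rewrite cnorm2M IH exprS mulrC.
Qed.

Lemma cnorm2_expi t : cnorm2 (cexpi t) = 1.
Proof. exact: cos2Dsin2. Qed.

Lemma cnorm2_conj z : cnorm2 (cconj z) = cnorm2 z.
Proof. by rewrite /cnorm2 /= sqrrN. Qed.

Lemma cnorm2_ge0 z : 0 <= cnorm2 z.
Proof. by rewrite addr_ge0 // sqr_ge0. Qed.

Lemma cnorm2_eq0 z : cnorm2 z = 0 -> z = (0, 0).
Proof.
case: z => a b /eqP; rewrite /cnorm2 /= paddr_eq0 ?sqr_ge0 //.
by rewrite !sqrf_eq0 => /andP [/eqP -> /eqP ->].
Qed.

Lemma cscale_inj c : c != 0 -> injective (cscale c).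
Proof. by move=> c0 [a b] [a' b'] [/(mulfI c0) -> /(mulfI c0) ->]. Qed.

Lemma cpow_sum0_norm p z w : (0 < p)%N ->
  cadd (cpow z p) (cpow w p) = (0, 0) -> cnorm2 z = cnorm2 w.
Proof.
move=> p_gt0 hsum; apply/eqP; rewrite -(eqrXn2 p_gt0) ?cnorm2_ge0 //.
rewrite -!cnorm2_pow; move: hsum; case: (cpow z p) => [a b]; case: (cpow w p) => [a' b'].
rewrite /cadd /cnorm2 /= => -[/eqP + /eqP]; rewrite !addr_eq0 => /eqP -> /eqP ->.
by rewrite !sqrrN.
Qed.

(* Equality case of Cauchy-Schwarz: if z conj w is a positive real and
   |z| = |w|, then z = w. *)
Lemma cmul_conj_pos z w d : 0 < d -> cmul z (cconj w) = (d, 0) ->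
  cnorm2 z = cnorm2 w -> z = w.
Proof.
move=> d_gt0 hzw hnorm.
have hd2 : d ^+ 2 = cnorm2 z ^+ 2.
  have := cnorm2M z (cconj w).
  by rewrite hzw cnorm2_conj -hnorm /cnorm2 /= expr0n addr0 -expr2.
have hd : d = cnorm2 z.
  by apply/eqP; rewrite -(@eqrXn2 _ 2) ?(ltW d_gt0) ?cnorm2_ge0 ?hd2.
have : cnorm2 (z.1 - w.1, z.2 - w.2) = cnorm2 z + cnorm2 w - (cmul z (cconj w)).1 *+ 2.
  by rewrite /cnorm2 /cmul /cconj /=; ring.
rewrite hzw /= -hnorm -hd mulr2n subrr => /cnorm2_eq0 [/eqP + /eqP].
by rewrite !subr_eq0; case: z {hzw hnorm hd hd2} => a b; case: w => a' b' /= /eqP -> /eqP ->.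
Qed.

Lemma no_conj_pos_root_sum p z w d : (0 < p)%N -> 0 < d ->
  cmul z (cconj w) = (d, 0) -> cadd (cpow z p) (cpow w p) = (0, 0) -> False.
Proof.
move=> p_gt0 d_gt0 hzw hsum.
have ezw := cmul_conj_pos d_gt0 hzw (cpow_sum0_norm p_gt0 hsum); subst w.
have : cnorm2 (cadd (cpow z p) (cpow z p)) = cnorm2 (cpow z p) * 4.
  by rewrite /cnorm2 /cadd /=; ring.
rewrite hsum cnorm2_pow /cnorm2 /= expr0n addr0 => /esym/eqP.
rewrite mulf_eq0 pnatr_eq0 orbF expf_eq0 p_gt0 => /eqP /cnorm2_eq0 z0.
move: hzw; rewrite z0 /cmul /= !mul0r subrr => -[d0 _].
by move: d_gt0; rewrite -d0 ltxx.
Qed.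

End ComplexPairs.

Section PlaneRotations.
Variable R : realType.

Definition ord1_2 : 'I_2 := @Ordinal 2 1 isT.
Definition rv2 (z : R * R) : 'rV[R]_2 := \row_j (if j == ord0 then z.1 else z.2).
Definition cpx (u : 'rV[R]_2) : R * R := (u ord0 ord0, u ord0 ord1_2).
Definition rot_mx (t : R) : 'M[R]_2 :=
  \matrix_(i, j) (if i == j then cos t else if i == ord0 then sin t else - sin t).

Lemma cpxK : cancel cpx rv2.
Proof.
move=> u; apply/rowP => j; rewrite mxE /cpx /=.
by case: j => [[|[|//]]] Hj /=; congr (u _ _); apply: val_inj.
Qed.

Lemma rv2K : cancel rv2 cpx.
Proof. by case=> a b; rewrite /cpx /rv2 !mxE. Qed.

Lemma cpx_inj : injective cpx. Proof. exact: can_inj cpxK. Qed.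
Lemma rv2_inj : injective rv2. Proof. exact: can_inj rv2K. Qed.

Lemma rv2_0 : rv2 (0, 0) = 0.
Proof. by apply/rowP => j; rewrite !mxE; case: ifP. Qed.

Lemma scale_rv2 c z : c *: rv2 z = rv2 (cscale c z).
Proof. by apply/rowP => j; rewrite !mxE; case: ifP. Qed.

Lemma sum_ord2 (F : 'I_2 -> R) : \sum_(i < 2) F i = F ord0 + F ord1_2.
Proof. by rewrite !big_ord_recl big_ord0 addr0; congr (_ + F _); apply: val_inj. Qed.

Lemma cpx_rot u t : cpx (u *m rot_mx t) = cmul (cpx u) (cexpi t).
Proof. by rewrite /cpx /cmul /cexpi !mxE !sum_ord2 !mxE /=; congr pair; ring. Qed.

Lemma rv2_rot z t : rv2 z *m rot_mx t = rv2 (cmul z (cexpi t)).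
Proof. by apply: cpx_inj; rewrite cpx_rot !rv2K. Qed.

Lemma mx2_ext (A B : 'M[R]_2) : (forall u, cpx (u *m A) = cpx (u *m B)) -> A = B.
Proof. by move=> h; apply/row_matrixP => i; rewrite !rowE; apply: cpx_inj. Qed.

Lemma rot_mxD a b : rot_mx a *m rot_mx b = rot_mx (a + b).
Proof. by apply: mx2_ext => u; rewrite mulmxA !cpx_rot cexpiD /cmul /=; congr pair; ring. Qed.

Lemma rot_mx0 : rot_mx 0 = 1%:M.
Proof. by apply/matrixP => i j; rewrite !mxE cos0 sin0 oppr0; case: ifP => //; case: ifP. Qed.

Lemma rot_mx_pi : rot_mx pi = - 1%:M.
Proof.
apply/matrixP => i j; rewrite !mxE cospi sinpi oppr0.
by case: (i == j); case: (i == ord0); rewrite /= ?oppr0.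
Qed.

Lemma rot_mx_orth a : rot_mx a *m (rot_mx a)^T = 1%:M.
Proof.
have -> : (rot_mx a)^T = rot_mx (- a).
  apply/matrixP => i j; rewrite !mxE cosN sinN eq_sym.
  by case: i => [[|[|//]]] Hi; case: j => [[|[|//]]] Hj //=; rewrite ?opprK.
by rewrite rot_mxD subrr rot_mx0.
Qed.

Lemma rot_mx_period t m : rot_mx (t + (pi *+ 2) *+ m) = rot_mx t.
Proof. by apply: mx2_ext => u; rewrite !cpx_rot cexpi_period. Qed.

Lemma rot_mx_cont (a : R -> R) (i j : 'I_2) :
  continuous a -> continuous (fun t => rot_mx (a t) i j).
Proof.
move=> ca t; under eq_fun do rewrite mxE.
case: (i == j); last case: (i == ord0).
- exact: (continuous_comp (ca t) (@continuous_cos R _)).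
- exact: (continuous_comp (ca t) (@continuous_sin R _)).
- by apply: continuousN; exact: (continuous_comp (ca t) (@continuous_sin R _)).
Qed.

Lemma rot_mx_fix (u : 'rV[R]_2) t : cos t < 1 -> u *m rot_mx t = u -> u = 0.
Proof.
move=> hc /(congr1 cpx); rewrite cpx_rot -{3}(cpxK u) -rv2_0.
case: (cpx u) => a b; rewrite /cmul /cexpi /= => -[h1 h2].
have hcs := cos2Dsin2 t.
have hpos : (cos t - 1) ^+ 2 + sin t ^+ 2 != 0.
  apply/eqP; have -> : (cos t - 1) ^+ 2 + sin t ^+ 2 = (cos t ^+ 2 + sin t ^+ 2) + 1 - cos t *+ 2.
    by ring.
  by rewrite hcs mulr2n; lra.
have ea : a * ((cos t - 1) ^+ 2 + sin t ^+ 2) = 0.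
  have -> : a * ((cos t - 1) ^+ 2 + sin t ^+ 2) =
    (a * cos t - b * sin t - a) * (cos t - 1) + (a * sin t + b * cos t - b) * sin t by ring.
  by rewrite h1 h2 !subrr !mul0r addr0.
have eb : b * ((cos t - 1) ^+ 2 + sin t ^+ 2) = 0.
  have -> : b * ((cos t - 1) ^+ 2 + sin t ^+ 2) =
    (a * sin t + b * cos t - b) * (cos t - 1) - (a * cos t - b * sin t - a) * sin t by ring.
  by rewrite h1 h2 !subrr !mul0r subr0.
by move/eqP: ea; move/eqP: eb; rewrite !mulf_eq0 (negbTE hpos) !orbF => /eqP -> /eqP ->.
Qed.

End PlaneRotations.

Section EuclideanNorm.
Variable R : realType.

Definition norm2 n (u : 'rV[R]_n) : R := \sum_(i < n) u ord0 i ^+ 2.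
Definition normalize n (u : 'rV[R]_n) : 'rV[R]_n := (Num.sqrt (norm2 u))^-1 *: u.

Lemma norm2_cpx u : norm2 u = cnorm2 (cpx u).
Proof. by rewrite /norm2 sum_ord2. Qed.

Lemma norm2_rot u t : norm2 (u *m rot_mx t) = norm2 u.
Proof. by rewrite !norm2_cpx cpx_rot cnorm2M cnorm2_expi mulr1. Qed.

Lemma norm2_row m n (a : 'rV[R]_m) (b : 'rV[R]_n) : norm2 (row_mx a b) = norm2 a + norm2 b.
Proof.
by rewrite /norm2 big_split_ord /=; congr (_ + _); apply: eq_bigr => i _;
  rewrite ?row_mxEl ?row_mxEr.
Qed.

Lemma norm2Z n c (u : 'rV[R]_n) : norm2 (c *: u) = c ^+ 2 * norm2 u.
Proof. by rewrite /norm2 mulr_sumr; apply: eq_bigr => i _; rewrite mxE; ring. Qed.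

Lemma norm2N n (u : 'rV[R]_n) : norm2 (- u) = norm2 u.
Proof. by rewrite -scaleN1r norm2Z sqrrN expr1n mul1r. Qed.

Lemma norm2_0 n : norm2 (0 : 'rV[R]_n) = 0.
Proof. by rewrite /norm2 big1 // => i _; rewrite mxE expr0n. Qed.

Lemma norm2_ge0 n (u : 'rV[R]_n) : 0 <= norm2 u.
Proof. by rewrite sumr_ge0 // => i _; rewrite sqr_ge0. Qed.

Lemma norm2_eq0 n (u : 'rV[R]_n) : norm2 u = 0 -> u = 0.
Proof.
move=> h; apply/rowP => i; rewrite mxE (_ : 0 = ord0); last exact: val_inj.
apply/eqP; rewrite -sqrf_eq0; apply/eqP.
exact: (psumr_eq0P (fun i _ => sqr_ge0 (u ord0 i)) h).
Qed.

Lemma norm2_normalize n (u : 'rV[R]_n) : norm2 u != 0 -> norm2 (normalize u) = 1.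
Proof. by move=> hu; rewrite /normalize norm2Z exprVn sqr_sqrtr ?norm2_ge0 // mulVf. Qed.

Lemma normalize_id n (u : 'rV[R]_n) : norm2 u = 1 -> normalize u = u.
Proof. by move=> h; rewrite /normalize h sqrtr1 invr1 scale1r. Qed.

Lemma eq_opp_self n (v : 'rV[R]_n) : v = - v -> v = 0.
Proof.
move=> h; have : (2 : R) *: v = 0 by rewrite scaler_nat mulr2n {1}h addNr.
by move/eqP; rewrite scaler_eq0 pnatr_eq0 /= => /eqP.
Qed.

Lemma sphere_opp_neq n (y : 'rV[R]_n) : unit_sphere n y -> - y != y.
Proof.
move=> hy; apply/eqP => /esym /eq_opp_self y0.
have : norm2 y = 1 := hy.
by rewrite y0 norm2_0 => /eqP; rewrite eq_sym oner_eq0.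
Qed.

End EuclideanNorm.

Section Continuity.
Variable R : realType.

Lemma continuous_eqfun (T U : topologicalType) (f g : T -> U) x :
  f =1 g -> {for x, continuous f} -> {for x, continuous g}.
Proof. by move=> /funext ->. Qed.

Lemma continuous_sum (T : topologicalType) (V : normedModType R) (I : Type)
    (s : seq I) (g : I -> T -> V) (x : T) :
  (forall i, {for x, continuous (g i)}) ->
  {for x, continuous (fun y => \sum_(i <- s) g i y)}.
Proof.
move=> hg; apply: cvg_big => //; last by move=> i _; exact: hg.
by move=> z; apply: continuousD; [exact: cvg_fst | exact: cvg_snd].
Qed.

Lemma continuous_row (T : topologicalType) n (G : T -> 'rV[R]_n) x :
  (forall i, {for x, continuous (fun y => G y 0 i)}) -> {for x, continuous G}.
Proof.
move=> h; have -> : G = (fun y => \sum_(j < n) G y 0 j *: 'e_j).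
  by apply: funext => y; rewrite -row_sum_delta.
by apply: continuous_sum => j; exact: continuousZr_tmp.
Qed.

Lemma norm2_cont n (u : 'rV[R]_n) : {for u, continuous (@norm2 R n)}.
Proof. by apply: continuous_sum => i; apply: continuousM; exact: coord_continuous. Qed.

Lemma normalize_cont n (u : 'rV[R]_n) : norm2 u != 0 -> {for u, continuous (@normalize R n)}.
Proof.
move=> hu; apply: continuousZ; last exact: cvg_id.
apply: continuousV; first by rewrite sqrtr_eq0 -ltNge lt_def hu norm2_ge0.
exact: (continuous_comp (@norm2_cont n u) (@sqrt_continuous R _)).
Qed.

Definition ccont (T : topologicalType) (x : T) (z : T -> R * R) :=
  {for x, continuous (fun y => (z y).1)} /\ {for x, continuous (fun y => (z y).2)}.

Lemma ccont_mul (T : topologicalType) (x : T) z w :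
  ccont x z -> ccont x w -> ccont x (fun y => cmul (z y) (w y)).
Proof.
move=> [z1 z2] [w1 w2]; split.
- by apply: continuousB; apply: continuousM.
- by apply: continuousD; apply: continuousM.
Qed.

Lemma ccont_add (T : topologicalType) (x : T) z w :
  ccont x z -> ccont x w -> ccont x (fun y => cadd (z y) (w y)).
Proof. by move=> [z1 z2] [w1 w2]; split; apply: continuousD. Qed.

Lemma ccont_conj (T : topologicalType) (x : T) z : ccont x z -> ccont x (fun y => cconj (z y)).
Proof. by move=> [z1 z2]; split => //; apply: continuousN. Qed.

Lemma ccont_pow (T : topologicalType) (x : T) z n : ccont x z -> ccont x (fun y => cpow (z y) n).
Proof.
move=> hz; elim: n => [|n IH] /=; last exact: ccont_mul.
by split; exact: cst_continuous.
Qed.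

Lemma ccont_cpx m (x : 'rV[R]_m) (f : 'rV[R]_m -> 'rV[R]_2) :
  (forall i, {for x, continuous (fun y => f y 0 i)}) -> ccont x (fun y => cpx (f y)).
Proof. by move=> h; split; exact: h. Qed.

Lemma continuous_row_mx (T : topologicalType) m n (F : T -> 'rV[R]_m) (G : T -> 'rV[R]_n) x :
  {for x, continuous F} -> {for x, continuous G} ->
  {for x, continuous (fun y => row_mx (F y) (G y))}.
Proof.
move=> cF cG; apply: continuous_row => i; rewrite -[i](@fintype.splitK m n).
case: (fintype.split i) => j /=.
- apply: (@continuous_eqfun _ _ (fun y => F y 0 j)); first by move=> y; rewrite row_mxEl.
  exact: (continuous_comp cF (@coord_continuous _ _ _ 0 j _)).
- apply: (@continuous_eqfun _ _ (fun y => G y 0 j)); first by move=> y; rewrite row_mxEr.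
  exact: (continuous_comp cG (@coord_continuous _ _ _ 0 j _)).
Qed.

Lemma continuous_rv2 (T : topologicalType) (x : T) z :
  ccont x z -> {for x, continuous (fun y => rv2 (z y))}.
Proof.
move=> [z1 z2]; apply: continuous_row => -[[|[|//]] Hi].
- by apply: (continuous_eqfun _ z1) => y; rewrite mxE.
- by apply: (continuous_eqfun _ z2) => y; rewrite mxE.
Qed.

End Continuity.

Section MissedValue.
Variables (R : realType) (n : nat) (f : 'rV[R]_n -> 'rV[R]_n) (y : 'rV[R]_n).
Hypothesis f_sph : forall x, unit_sphere n x -> unit_sphere n (f x).
Hypothesis f_cont : forall x, unit_sphere n x -> {for x, continuous f}.
Hypothesis y_sph : unit_sphere n y.
Hypothesis f_miss : forall x, unit_sphere n x -> f x != y.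

Definition segment_to_antipode (tx : R * 'rV[R]_n) := (1 - tx.1) *: f tx.2 - tx.1 *: y.
Definition homotopy_to_antipode tx := normalize (segment_to_antipode tx).

(* The segment avoids 0: equal norms force t = 1/2, and then f x = y. *)
Lemma segment_to_antipode_nz t x :
  unit_sphere n x -> norm2 (segment_to_antipode (t, x)) != 0.
Proof.
move=> hx; apply/eqP => /norm2_eq0 /eqP; rewrite subr_eq0 => /eqP /= h.
have fx1 : norm2 (f x) = 1 := f_sph hx.
have y1 : norm2 y = 1 := y_sph.
have ht : t = 2^-1.
  move: (congr1 (@norm2 R n) h); rewrite !norm2Z fx1 y1 !mulr1 => h2.
  have : 1 - t *+ 2 = (1 - t) ^+ 2 - t ^+ 2 by ring.
  by rewrite h2 subrr mulr2n; lra.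
move: h; rewrite ht (_ : 1 - 2^-1 = 2^-1 :> R); last by field.
by move/scalerI; rewrite invr_eq0 pnatr_eq0 => /(_ isT) /eqP; rewrite (negbTE (f_miss hx)).
Qed.

Lemma homotopy_to_antipode_cont t x :
  unit_sphere n x -> {for (t, x), continuous homotopy_to_antipode}.
Proof.
move=> hx; apply: continuous_comp; last exact: normalize_cont (segment_to_antipode_nz t hx).
apply: continuousB; last by apply: continuousZr_tmp; exact: cvg_fst.
apply: continuousZ; first by apply: continuousB; [exact: cst_continuous | exact: cvg_fst].
apply: (@continuous_eqfun _ _ (f \o snd)) => //.
by apply: continuous_comp; [exact: cvg_snd | exact: f_cont].
Qed.

(* f is homotopic to the constant map -y, for which y is a regular value
   with empty preimage. *)
Lemma missed_value_degree0 : has_degree f 0.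
Proof.
have y1 : norm2 y = 1 := y_sph.
exists (cst (- y)), setT, homotopy_to_antipode, y, [::]; split.
- by split; [exact: openT |].
- split; first by move=> x _; exact: differentiable_cst.
  split; last by move=> x _; exact: etrans (norm2N y) y_sph.
  move=> i j x _; apply: (@continuous_eqfun _ _ (fun=> lin1_mx (0 : 'rV[R]_n -> 'rV[R]_n) i j)).
    by move=> z; rewrite /jacobian diff_cst.
  exact: cst_continuous.
- split.
  + apply: continuous_in_subspaceT => -[t x]; rewrite inE => -[_ hx].
    exact: homotopy_to_antipode_cont.
  + by move=> t x _ hx; exact: norm2_normalize (segment_to_antipode_nz t hx).
  + move=> x hx; rewrite /homotopy_to_antipode /segment_to_antipode /=.
    by rewrite subr0 scale1r scale0r subr0 normalize_id //; exact: f_sph.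
  + move=> x _; rewrite /homotopy_to_antipode /segment_to_antipode /=.
    by rewrite subrr scale0r scale1r add0r normalize_id // norm2N.
- split => // x; rewrite in_nil; split => // -[_ /eqP].
  by rewrite (negbTE (sphere_opp_neq y_sph)).
- by rewrite big_nil.
Qed.

End MissedValue.

Section RotationPairs.
Variables (R : realType) (p : nat).

Definition angle_hom (a : R -> 'Z_p -> R) : Prop :=
  [/\ a 0 0 = 0,
      forall s t k l, exists q : nat, a s k + a t l = a (s + t) (k + l)%R + (pi *+ 2) *+ q,
      forall t k, exists q : nat, a (t + 1) k = a t k + (pi *+ 2) *+ q &
      forall k, continuous (fun t : R => a t k)].

Definition rot_pair_rep (a1 a2 : R -> 'Z_p -> R) t k : 'M[R]_(2 + 2) :=
  block_mx (rot_mx (a1 t k)) 0 0 (rot_mx (a2 t k)).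

Lemma mul_block_diag (x : 'rV[R]_(2 + 2)) (A B : 'M[R]_2) :
  x *m block_mx A 0 0 B = row_mx (lsubmx x *m A) (rsubmx x *m B).
Proof. by rewrite -{1}(hsubmxK x) mul_row_block !mulmx0 addr0 add0r. Qed.

Lemma rot_pair_rep_orth a1 a2 : angle_hom a1 -> angle_hom a2 -> orth_rep (rot_pair_rep a1 a2).
Proof.
move=> [h10 h1D h1P h1C] [h20 h2D h2P h2C]; rewrite /rot_pair_rep; split.
- move=> t k; rewrite tr_block_mx !trmx0 mulmx_block !mulmx0 !mul0mx !addr0 !add0r.
  by rewrite !rot_mx_orth scalar_mx_block.
- by rewrite h10 h20 rot_mx0 scalar_mx_block.
- move=> s t k l; rewrite mulmx_block !mulmx0 !mul0mx !addr0 !add0r !rot_mxD.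
  by have [q1 ->] := h1D s t k l; have [q2 ->] := h2D s t k l; rewrite !rot_mx_period.
- by move=> t k; have [q1 ->] := h1P t k; have [q2 ->] := h2P t k; rewrite !rot_mx_period.
- move=> k i j; rewrite -[i](@fintype.splitK 2 2) -[j](@fintype.splitK 2 2).
  case: (fintype.split i) => i'; case: (fintype.split j) => j' /=.
  + under eq_fun do rewrite block_mxEul. exact: rot_mx_cont.
  + under eq_fun do rewrite block_mxEur mxE. exact: cst_continuous.
  + under eq_fun do rewrite block_mxEdl mxE. exact: cst_continuous.
  + under eq_fun do rewrite block_mxEdr. exact: rot_mx_cont.
Qed.

(* These representations preserve the Euclidean norm, so they commute with
   normalization. *)
Lemma normalize_rot_pair (u : 'rV[R]_(2 + 2)) a b :
  normalize (u *m block_mx (rot_mx a) 0 0 (rot_mx b)) =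
  normalize u *m block_mx (rot_mx a) 0 0 (rot_mx b).
Proof.
rewrite /normalize -scalemxAl; congr (_^-1 *: _); congr Num.sqrt.
by rewrite mul_block_diag norm2_row !norm2_rot -norm2_row hsubmxK.
Qed.

End RotationPairs.

(* The example for a fixed p > 1 (p prime in the proposition). *)
Section Example.
Variables (R : realType) (p : nat).
Hypothesis p_gt1 : (1 < p)%N.

Lemma p_gt0 : (0 < p)%N. Proof. exact: ltnW. Qed.

Lemma natr_p_neq0 : (p%:R : R) != 0.
Proof. by rewrite pnatr_eq0 -lt0n p_gt0. Qed.

Lemma Zp_val0 : (nat_of_ord (0%R : 'Z_p) = 0)%N.
Proof. by case: p p_gt1. Qed.

Lemma Zp_val1 : (nat_of_ord (1%R : 'Z_p) = 1)%N.
Proof. by case: p p_gt1 => [|[|]]. Qed.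

Lemma Zp_frac (k l : 'Z_p) : exists q : nat,
  (k : nat)%:R / p%:R + (l : nat)%:R / p%:R = (nat_of_ord (k + l)%R)%:R / (p%:R : R) + q%:R.
Proof.
exists ((k + l) %/ p)%N.
have -> : nat_of_ord (k + l)%R = ((k + l) %% p)%N by case: p p_gt1 k l => [|[|]].
apply: (mulIf natr_p_neq0).
rewrite mulrDl !mulrDl -!mulrA !mulVf ?natr_p_neq0 // !mulr1 -!natrD -natrM -natrD.
by rewrite [X in _ = X%:R]addnC -divn_eq.
Qed.

Definition lin_angle (a b : nat) (t : R) (k : 'Z_p) : R :=
  pi *+ 2 * (a%:R * t + b%:R * ((k : nat)%:R / p%:R)).

Lemma lin_angle_t0 a b t : lin_angle a b t 0 = pi *+ 2 * (a%:R * t).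
Proof. by rewrite /lin_angle Zp_val0 mul0r mulr0 addr0. Qed.

Lemma lin_angle_hom a b : angle_hom (lin_angle a b).
Proof.
split.
- by rewrite lin_angle_t0 mulr0 mulr0.
- move=> s t k l; have [q hq] := Zp_frac k l; exists (b * q)%N; rewrite /lin_angle.
  have -> : (nat_of_ord (k + l)%R)%:R / p%:R =
      (k : nat)%:R / p%:R + (l : nat)%:R / p%:R - q%:R :> R by rewrite hq addrK.
  by rewrite -[X in _ = _ + X]mulr_natr natrM; ring.
- by move=> t k; exists a; rewrite /lin_angle -[X in _ = _ + X]mulr_natr; ring.
- move=> k t; apply: (@continuous_eqfun _ _
    (fun t => pi *+ 2 * a%:R * t + pi *+ 2 * (b%:R * ((k : nat)%:R / p%:R)))).
    by move=> s; rewrite /lin_angle; ring.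
  apply: continuousD; last exact: cst_continuous.
  by apply: continuousM; [exact: cst_continuous | exact: cvg_id].
Qed.

(* V : (t,k).(z,w) = (e(t + k/p) z, e(t) w);  W : (t,k).(u,v) = (e(k/p) u, e(p t) v). *)
Definition repV := rot_pair_rep (lin_angle 1 1) (lin_angle 1 0).
Definition repW := rot_pair_rep (lin_angle 0 1) (lin_angle p 0).

(* (1/2, 0) acts as -1 on V. *)
Lemma repV_fpf : fixed_point_free repV.
Proof.
move=> v /(_ (2^-1) 0); rewrite /repV /rot_pair_rep !lin_angle_t0.
have -> : pi *+ 2 * (1%:R * 2^-1) = pi :> R by field.
rewrite rot_mx_pi mul_block_diag !mulmxN !mulmx1 -opp_row_mx hsubmxK => h.
by apply: eq_opp_self; rewrite h.
Qed.

Lemma cos_2pi_div_lt1 : cos (pi *+ 2 * (1 / p%:R)) < 1 :> R.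
Proof.
have p_pos : (0 : R) < p%:R by rewrite ltr0n p_gt0.
have -> : pi *+ 2 * (1 / p%:R) = (pi / p%:R) *+ 2 :> R.
  by rewrite -[(pi / p%:R) *+ 2]mulr_natr -[pi *+ 2]mulr_natr; field; rewrite gt_eqF.
rewrite cos_mulr2n cos2sin2.
have : 0 < sin (pi / p%:R) :> R.
  apply: sin_gt0_pi; rewrite divr_gt0 ?pi_gt0 //=.
  by rewrite ltr_pdivrMr // ltr_pMr ?pi_gt0 // ltr1n.
move=> hs; have : 0 < sin (pi / p%:R) ^+ 2 :> R by apply: mulr_gt0.
by move: (sin _ ^+ 2) => s; rewrite mulr2n; lra.
Qed.

(* (1/(2p), 0) acts as -1 on the second factor of W, and (0, 1) rotates the
   first factor by 2 pi/p. *)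
Lemma repW_fpf : fixed_point_free repW.
Proof.
move=> v hv; rewrite -(hsubmxK v).
have -> : rsubmx v = 0.
  move: (hv (2^-1 / p%:R) 0); rewrite /repW /rot_pair_rep !lin_angle_t0.
  have -> : pi *+ 2 * (p%:R * (2^-1 / p%:R)) = pi :> R by field; exact: natr_p_neq0.
  rewrite mulr0n mul0r mulr0 rot_mx_pi rot_mx0 mul_block_diag mulmx1 mulmxN mulmx1.
  by rewrite -{3}(hsubmxK v) => /eq_row_mx [_ h]; apply: eq_opp_self; rewrite -{1}h.
have -> : lsubmx v = 0.
  move: (hv 0 1); rewrite /repW /rot_pair_rep mul_block_diag.
  have -> : lin_angle p 0 0 1 = 0 by rewrite /lin_angle mulr0n !mul0r mulr0 add0r mulr0.
  rewrite rot_mx0 mulmx1 -{3}(hsubmxK v) => /eq_row_mx [h _]; apply: (rot_mx_fix _ h).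
  rewrite /lin_angle mulr0n mul0r add0r Zp_val1 mulr1n mul1r; exact: cos_2pi_div_lt1.
by rewrite row_mx0.
Qed.

Definition zcoord (x : 'rV[R]_(2 + 2)) := cpx (lsubmx x).
Definition wcoord (x : 'rV[R]_(2 + 2)) := cpx (rsubmx x).
Definition F_raw (x : 'rV[R]_(2 + 2)) : 'rV[R]_(2 + 2) :=
  row_mx (rv2 (cmul (zcoord x) (cconj (wcoord x))))
         (rv2 (cadd (cpow (zcoord x) p) (cpow (wcoord x) p))).
Definition sphere_map (x : 'rV[R]_(2 + 2)) := normalize (F_raw x).
Definition base_point : 'rV[R]_(2 + 2) := row_mx (rv2 (1, 0)) 0.

(* F(g.x) = g.F(x): the z conj w component picks up e(t + k/p) e(-t), and
   z^p, w^p both pick up e(p t) (since e(k) = 1). *)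
Lemma F_raw_equiv x t k : F_raw (x *m repV t k) = F_raw x *m repW t k.
Proof.
rewrite /repV /repW /rot_pair_rep !mul_block_diag /F_raw /zcoord /wcoord.
rewrite !row_mxKl !row_mxKr !rv2_rot !cpx_rot; congr row_mx; congr rv2.
- have -> : lin_angle 1 1 t k = lin_angle 1 0 t k + lin_angle 0 1 t k.
    by rewrite /lin_angle; ring.
  by rewrite cexpiD cmul_conj_unit // cnorm2_expi.
- rewrite !cpowM !cpow_expi.
  have -> : lin_angle 1 0 t k *+ p = lin_angle p 0 t k.
    by rewrite /lin_angle -mulr_natr; ring.
  have -> : lin_angle 1 1 t k *+ p = lin_angle p 0 t k + (pi *+ 2) *+ k.
    by rewrite /lin_angle -[X in _ = _ + X]mulr_natr; field; exact: natr_p_neq0.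
  by rewrite cexpi_period -cmulDl.
Qed.

(* Since W preserves norms, the equivariance passes to f. *)
Lemma sphere_map_equiv x t k : sphere_map (x *m repV t k) = sphere_map x *m repW t k.
Proof. by rewrite /sphere_map F_raw_equiv /repW /rot_pair_rep normalize_rot_pair. Qed.

Lemma norm2_split (x : 'rV[R]_(2 + 2)) : norm2 x = cnorm2 (zcoord x) + cnorm2 (wcoord x).
Proof. by rewrite -{1}(hsubmxK x) norm2_row !norm2_cpx. Qed.

(* F vanishes nowhere on the sphere: |z|^2 |w|^2 = 0 and z^p + w^p = 0
   would give |z| = |w| = 0. *)
Lemma F_raw_nz x : unit_sphere _ x -> norm2 (F_raw x) != 0.
Proof.
move=> hx; have : norm2 x = 1 := hx.
rewrite norm2_split /F_raw norm2_row !norm2_cpx !rv2K cnorm2M cnorm2_conj => h1.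
rewrite paddr_eq0 ?mulr_ge0 ?cnorm2_ge0 //.
apply/negP => /andP [/eqP hzw /eqP /cnorm2_eq0 hsum].
move: h1 hzw; rewrite -(cpow_sum0_norm p_gt0 hsum) -expr2 => h1 /eqP.
by rewrite expf_eq0 /= => /eqP z0; move: h1; rewrite z0 addr0 => /eqP; rewrite eq_sym oner_eq0.
Qed.

Lemma sphere_map_sph x : unit_sphere _ x -> unit_sphere _ (sphere_map x).
Proof. by move=> hx; exact: norm2_normalize (F_raw_nz hx). Qed.

Lemma base_point_sph : unit_sphere _ base_point.
Proof.
suff : norm2 base_point = 1 by [].
rewrite norm2_row norm2_0 addr0 norm2_cpx rv2K.
by rewrite /cnorm2 /= expr1n expr0n addr0.
Qed.

(* f misses the base point: otherwise z conj w > 0 and z^p + w^p = 0. *)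
Lemma sphere_map_miss x : unit_sphere _ x -> sphere_map x != base_point.
Proof.
move=> hx; apply/eqP; rewrite /sphere_map /normalize.
have c_gt0 : 0 < (Num.sqrt (norm2 (F_raw x)))^-1.
  by rewrite invr_gt0 sqrtr_gt0 lt_def F_raw_nz // norm2_ge0.
move: c_gt0; set c := (Num.sqrt _)^-1 => c_gt0.
rewrite /F_raw /base_point scale_row_mx !scale_rv2 -rv2_0.
have c0 : c != 0 by rewrite gt_eqF.
have -> : ((1 : R), (0 : R)) = cscale c (c^-1, 0) by rewrite /cscale /= mulfV // mulr0.
have -> : ((0 : R), (0 : R)) = cscale c (0, 0) by rewrite /cscale /= mulr0.
move=> /eq_row_mx [/rv2_inj /(cscale_inj c0) hzw /rv2_inj /(cscale_inj c0) hsum].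
by apply: (no_conj_pos_root_sum p_gt0 _ hzw hsum); rewrite invr_gt0.
Qed.

Lemma zcoord_cont x : ccont x zcoord.
Proof.
apply: ccont_cpx => i.
apply: (@continuous_eqfun _ _ (fun y : 'rV[R]_(2 + 2) => y 0 (lshift 2 i))).
  by move=> y; rewrite mxE.
exact: coord_continuous.
Qed.

Lemma wcoord_cont x : ccont x wcoord.
Proof.
apply: ccont_cpx => i.
apply: (@continuous_eqfun _ _ (fun y : 'rV[R]_(2 + 2) => y 0 (rshift 2 i))).
  by move=> y; rewrite mxE.
exact: coord_continuous.
Qed.

Lemma sphere_map_cont x : unit_sphere _ x -> {for x, continuous sphere_map}.
Proof.
move=> hx; apply: continuous_comp; last exact: normalize_cont (F_raw_nz hx).
apply: continuous_row_mx; apply: continuous_rv2.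
- exact: ccont_mul (zcoord_cont x) (ccont_conj (wcoord_cont x)).
- exact: ccont_add (ccont_pow p (zcoord_cont x)) (ccont_pow p (wcoord_cont x)).
Qed.

Lemma sphere_map_Gmap : Gmap repV repW sphere_map.
Proof.
split; first exact: sphere_map_sph.
- by apply: continuous_in_subspaceT => x; rewrite inE; exact: sphere_map_cont.
- by move=> x t k _; exact: sphere_map_equiv.
Qed.

End Example.

Theorem proposition4p1 (R : realType) (p : nat) (hp : prime p) :
  exists (n : nat) (rhoV rhoW : R -> 'Z_p -> 'M[R]_n)
         (f : 'rV[R]_n -> 'rV[R]_n),
    [/\ orth_rep rhoV /\ orth_rep rhoW,
        fixed_point_free rhoV /\ fixed_point_free rhoW,
        Gmap rhoV rhoW f & has_degree f 0].
Proof.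
have p_gt1 := prime_gt1 hp.
exists (2 + 2)%N, (@repV R p), (@repW R p), (@sphere_map R p); split.
- by split; apply: rot_pair_rep_orth; exact: lin_angle_hom.
- by split; [exact: repV_fpf | exact: repW_fpf].
- exact: sphere_map_Gmap.
- apply: (missed_value_degree0 (y := @base_point R)).
  + exact: sphere_map_sph.
  + exact: sphere_map_cont.
  + exact: base_point_sph.
  + exact: sphere_map_miss.
Qed.
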